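(* Let $P$ be a poset such that the interval monoid $\mathcal{M}(P)$ is a gcd-monoid, and let $[u,v]$ be an extreme spindle of $P$. Then the category $\mathcal{C}(P,u,v)$ is a gcd-category, and its universal monoid $\mathcal{M}(P,u,v)=\mathrm{U_{mon}}(\mathcal{C}(P,u,v))$ is a gcd-monoid.
   Context: For a poset $P$, $\mathcal{M}(P)$ is the monoid presented by generators $[x,y]$ ($x\le y$) and relations $[x,x]=1$, $[x,z]=[x,y][y,z]$ for $x\le y\le z$. A closed interval $[u,v]$ with $u<v$, containing some $z$ with $u<z<v$, is a spindle if the comparability relation on the open interval $\{x:u<x<v\}$ is an equivalence relation; it is an extreme spindle if moreover $u$ is minimal and $v$ is maximal in $P$. Let $\mathcal{C}_{u,v}$ be the set of maximal chains of $[u,v]$. The category $\mathcal{C}(P,u,v)$ (arrow-only, identities $[x,x]$ for $x\in P$) has underlying set $\{[x,y]: x\le y \text{ in } P,\ (x,y)\ne(u,v)\}\cup\mathcal{C}_{u,v}$, where each $Z\in\mathcal{C}_{u,v}$ has source $[u,u]$ and target $[v,v]$, and the only defined products are: $[u,u]\cdot Z=Z\cdot[v,v]=Z$ for $Z\in\mathcal{C}_{u,v}$; $[x,y]\cdot[y,z]=[x,z]$ whenever $x\le y\le z$ and $(x,z)\ne(u,v)$; $[u,z]\cdot[z,v]=Z$ whenever $u<z<v$ and $Z$ is the maximal chain of $[u,v]$ containing $z$. For a category $S$ (arrow-only), $\mathrm{U_{mon}}(S)$ is the monoid presented by generators $\varepsilon(x)$, $x\in S$, relations $\varepsilon(e)=1$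 for identities and $\varepsilon(x)\varepsilon(y)=\varepsilon(xy)$ whenever $xy$ is defined. Left/right divisibility in $C$: $a\leqslant b$ iff $b=ax$, $a\mathbin{\widetilde\leqslant}b$ iff $b=xa$. A category is conical if $xy$ being an identity forces $x$ to be an identity. A gcd-category is a conical, left and right cancellative category in which any two elements with the same source have a greatest lower bound for $\leqslant$ and any two with the same target have a greatest lower bound for $\mathbin{\widetilde\leqslant}$; a gcd-monoid is a gcd-category with one identity. *)

From Stdlib Require Import List.
Import ListNotations.
Set Implicit Arguments.
Unset Strict Implicit.

Definition is_poset (T : Type) (le : T -> T -> Prop) : Prop :=
  (forall x, le x x) /\
  (forall x y, le x y -> le y x -> x = y) /\
  (forall x y z, le x y -> le y z -> le x z).

Definition lt (T : Type) (le : T -> T -> Prop) (x y : T) : Prop := le x y /\ x <> y.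

Definition comparable (T : Type) (le : T -> T -> Prop) (x y : T) : Prop := le x y \/ le y x.

Definition open_int (T : Type) (le : T -> T -> Prop) (u v x : T) : Prop :=
  lt le u x /\ lt le x v.

Definition closed_int (T : Type) (le : T -> T -> Prop) (u v x : T) : Prop :=
  le u x /\ le x v.

Definition equiv_on (T : Type) (D : T -> Prop) (R : T -> T -> Prop) : Prop :=
  (forall x, D x -> R x x) /\
  (forall x y, D x -> D y -> R x y -> R y x) /\
  (forall x y z, D x -> D y -> D z -> R x y -> R y z -> R x z).

Definition spindle (T : Type) (le : T -> T -> Prop) (u v : T) : Prop :=
  lt le u v /\ (exists z, open_int le u v z) /\
  equiv_on (open_int le u v) (comparable le).

Definition minimal (T : Type) (le : T -> T -> Prop) (u : T) : Prop :=
  forall x, le x u -> x = u.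
Definition maximal (T : Type) (le : T -> T -> Prop) (v : T) : Prop :=
  forall x, le v x -> x = v.

Definition extreme_spindle (T : Type) (le : T -> T -> Prop) (u v : T) : Prop :=
  spindle le u v /\ minimal le u /\ maximal le v.

Definition chain_in (T : Type) (le : T -> T -> Prop) (u v : T) (Z : T -> Prop) : Prop :=
  (forall x, Z x -> closed_int le u v x) /\
  (forall x y, Z x -> Z y -> comparable le x y).

Definition maxchain (T : Type) (le : T -> T -> Prop) (u v : T) (Z : T -> Prop) : Prop :=
  chain_in le u v Z /\
  (forall Z', chain_in le u v Z' -> (forall x, Z x -> Z' x) -> forall x, Z' x -> Z x).

(** * Arrow-only categories (possibly presented up to an equality [aeq] on arrows)
    [mul a b c] means "the product ab is defined and equals c". *)
Record ACat := {
  Arr : Type;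
  Ob : Type;
  src : Arr -> Ob;
  tgt : Arr -> Ob;
  aeq : Arr -> Arr -> Prop;
  isid : Arr -> Prop;
  mul : Arr -> Arr -> Arr -> Prop
}.

Arguments src : clear implicits.
Arguments tgt : clear implicits.
Arguments aeq : clear implicits.
Arguments isid : clear implicits.
Arguments mul : clear implicits.

Section GcdCat.
Variable C : ACat.

Definition ldiv (a b : Arr C) : Prop := exists x c, mul C a x c /\ aeq C c b.
Definition rdiv (a b : Arr C) : Prop := exists x c, mul C x a c /\ aeq C c b.

Definition conical : Prop :=
  forall x y e, mul C x y e -> isid C e -> isid C x.

Definition left_cancellative : Prop :=
  forall a a' x y c d, mul C a x c -> mul C a' y d -> aeq C a a' -> aeq C c d -> aeq C x y.

Definition right_cancellative : Prop :=
  forall a a' x y c d, mul C x a c -> mul C y a' d -> aeq C a a' -> aeq C c d -> aeq C x y.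

Definition left_gcds : Prop :=
  forall a b, src C a = src C b ->
    exists g, ldiv g a /\ ldiv g b /\ (forall h, ldiv h a -> ldiv h b -> ldiv h g).

Definition right_gcds : Prop :=
  forall a b, tgt C a = tgt C b ->
    exists g, rdiv g a /\ rdiv g b /\ (forall h, rdiv h a -> rdiv h b -> rdiv h g).

Definition is_gcd_category : Prop :=
  conical /\ left_cancellative /\ right_cancellative /\ left_gcds /\ right_gcds.
End GcdCat.

(** * Presented monoids: words over generators modulo the congruence generated by R *)
Inductive cong (G : Type) (R : list G -> list G -> Prop) : list G -> list G -> Prop :=
| cong_base : forall p a b q, R a b -> cong R (p ++ a ++ q) (p ++ b ++ q)
| cong_refl : forall a, cong R a a
| cong_sym : forall a b, cong R a b -> cong R b a
| cong_trans : forall a b c, cong R a b -> cong R b c -> cong R a c.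

Definition monoid_cat (G : Type) (R : list G -> list G -> Prop) : ACat :=
  {| Arr := list G; Ob := unit; src := fun _ => tt; tgt := fun _ => tt;
     aeq := cong R; isid := fun w => cong R w nil;
     mul := fun a b c => c = a ++ b |}.

Definition is_gcd_monoid (G : Type) (R : list G -> list G -> Prop) : Prop :=
  is_gcd_category (monoid_cat R).

Definition IGen (T : Type) (le : T -> T -> Prop) : Type := { p : T * T | le (fst p) (snd p) }.

Definition interval_rel (T : Type) (le : T -> T -> Prop) (a b : list (IGen le)) : Prop :=
  (exists (x : T) (h : le x x), a = [exist _ (x, x) h] /\ b = []) \/
  (exists (x y z : T) (hxy : le x y) (hyz : le y z) (hxz : le x z),
      a = [exist (fun p => le (fst p) (snd p)) (x, z) hxz] /\
      b = [exist (fun p => le (fst p) (snd p)) (x, y) hxy;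
           exist (fun p => le (fst p) (snd p)) (y, z) hyz]).

Section CPuv.
Variables (T : Type) (le : T -> T -> Prop) (u v : T).

Inductive CArr : Type :=
| CIv (x y : T) (h : le x y) (hn : (x, y) <> (u, v))
| CCh (Z : T -> Prop) (hZ : maxchain le u v Z).

Arguments CIv : clear implicits.
Arguments CCh : clear implicits.

Definition Csrc (a : CArr) : T := match a with CIv x _ _ _ => x | CCh _ _ => u end.
Definition Ctgt (a : CArr) : T := match a with CIv _ y _ _ => y | CCh _ _ => v end.

Definition Caeq (a b : CArr) : Prop :=
  match a, b with
  | CIv x y _ _, CIv x' y' _ _ => x = x' /\ y = y'
  | CCh Z _, CCh Z' _ => forall t, Z t <-> Z' t
  | _, _ => False
  end.

Definition Cisid (a : CArr) : Prop :=
  match a with CIv x y _ _ => x = y | CCh _ _ => False end.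

Inductive Cmul : CArr -> CArr -> CArr -> Prop :=
| Cmul_iv : forall x y z h1 n1 h2 n2 h3 n3,
    Cmul (CIv x y h1 n1) (CIv y z h2 n2) (CIv x z h3 n3)
| Cmul_idl : forall h n Z hZ Z' hZ', (forall t, Z t <-> Z' t) ->
    Cmul (CIv u u h n) (CCh Z hZ) (CCh Z' hZ')
| Cmul_idr : forall h n Z hZ Z' hZ', (forall t, Z t <-> Z' t) ->
    Cmul (CCh Z hZ) (CIv v v h n) (CCh Z' hZ')
| Cmul_split : forall z h1 n1 h2 n2 Z hZ, lt le u z -> lt le z v -> Z z ->
    Cmul (CIv u z h1 n1) (CIv z v h2 n2) (CCh Z hZ).

Definition Ccat : ACat :=
  {| Arr := CArr; Ob := T; src := Csrc; tgt := Ctgt;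
     aeq := Caeq; isid := Cisid; mul := Cmul |}.
End CPuv.

Definition Umon_rel (C : ACat) (a b : list (Arr C)) : Prop :=
  (exists e, isid C e /\ a = [e] /\ b = []) \/
  (exists x y z, mul C x y z /\ a = [x; y] /\ b = [z]) \/
  (exists x y, aeq C x y /\ a = [x] /\ b = [y]).

From Stdlib Require Import List Classical ClassicalEpsilon ProofIrrelevance
  FunctionalExtensionality PropExtensionality.
Import ListNotations.
Set Implicit Arguments.
Unset Strict Implicit.

(* Words in the arrows of a conical category, taken modulo the relations of its
   universal monoid, have a unique normal form: non-identity letters, no two
   consecutive ones composable.  Between normal forms, left divisibility is being a
   prefix up to replacing the last letter by a left factor of the corresponding
   letter, so cancellativity and gcds lift letter by letter from the category to its
   universal monoid, and the right-hand versions follow by passing to the opposite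
   category and reversing words.  Conversely a single arrow is its own normal form,
   so gcds in the universal monoid restrict to arrows.  Viewing P as a category, whose
   universal monoid is M(P), this gives meets of elements above a common lower bound
   and joins of elements below a common upper bound.  In the spindle the maximal chain
   through an inner point z consists of u, v and the elements comparable with z;
   with these meets and joins every pair of arrows of C(P,u,v) with a common source
   (or target) has a gcd, so C(P,u,v) is a gcd-category and its universal monoid a
   gcd-monoid. *)

Local Notation decide := excluded_middle_informative.

Lemma cong_app (G : Type) (R : list G -> list G -> Prop) p a b q :
  cong R a b -> cong R (p ++ a ++ q) (p ++ b ++ q).
Proof.
  induction 1.
  - replace (p ++ (p0 ++ a ++ q0) ++ q) with ((p ++ p0) ++ a ++ (q0 ++ q))
      by (rewrite <- !app_assoc; reflexivity).
    replace (p ++ (p0 ++ b ++ q0) ++ q) with ((p ++ p0) ++ b ++ (q0 ++ q))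
      by (rewrite <- !app_assoc; reflexivity).
    apply cong_base; assumption.
  - apply cong_refl.
  - apply cong_sym; assumption.
  - eapply cong_trans; eassumption.
Qed.

Lemma cong_of_rel (G : Type) (R : list G -> list G -> Prop) a b : R a b -> cong R a b.
Proof.
  intro H. pose proof (cong_base [] [] H) as Hc. simpl in Hc.
  rewrite !app_nil_r in Hc. exact Hc.
Qed.

Lemma cong_sub (G : Type) (R1 R2 : list G -> list G -> Prop) :
  (forall a b, R1 a b -> cong R2 a b) -> forall a b, cong R1 a b -> cong R2 a b.
Proof.
  intros H a b Hc. induction Hc.
  - apply cong_app. auto.
  - apply cong_refl.
  - apply cong_sym; assumption.
  - eapply cong_trans; eassumption.
Qed.

Lemma monoid_cat_ext (G : Type) (R1 R2 : list G -> list G -> Prop) :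
  (forall a b, R1 a b -> cong R2 a b) -> (forall a b, R2 a b -> cong R1 a b) ->
  monoid_cat R1 = monoid_cat R2.
Proof.
  intros H12 H21. unfold monoid_cat.
  replace (cong R2) with (cong R1); [reflexivity|].
  apply functional_extensionality; intro a; apply functional_extensionality; intro b.
  apply propositional_extensionality; split; apply cong_sub; assumption.
Qed.

(** * Universal monoids of conical categories *)

Record conical_category (C : ACat) : Prop := {
  aeq_eq : forall a b, aeq C a b <-> a = b;
  mul_match : forall a b c, mul C a b c -> tgt C a = src C b;
  mul_defined : forall a b, tgt C a = src C b -> exists c, mul C a b c;
  mul_fun : forall a b c c', mul C a b c -> mul C a b c' -> c = c';
  mul_src : forall a b c, mul C a b c -> src C c = src C a;
  mul_tgt : forall a b c, mul C a b c -> tgt C c = tgt C b;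
  id_loop : forall e, isid C e -> src C e = tgt C e;
  id_at_tgt : forall a, exists e, isid C e /\ src C e = tgt C a;
  id_at_src : forall a, exists e, isid C e /\ src C e = src C a;
  mul_idl : forall e b, isid C e -> tgt C e = src C b -> mul C e b b;
  mul_idr : forall a e, isid C e -> tgt C a = src C e -> mul C a e a;
  mul_assoc : forall a b c ab bc abc,
    mul C a b ab -> mul C b c bc -> mul C ab c abc -> mul C a bc abc;
  conical_l : forall a b c, mul C a b c -> isid C c -> isid C a;
  conical_r : forall a b c, mul C a b c -> isid C c -> isid C b }.

Section NormalForm.
Variable C : ACat.
Hypothesis HC : conical_category C.
Local Notation A := (Arr C).
Local Notation R := (@Umon_rel C).

Definition compose (a b : A) : A := epsilon (inhabits a) (mul C a b).

Lemma compose_spec a b : tgt C a = src C b -> mul C a b (compose a b).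
Proof. intro E. unfold compose. apply epsilon_spec, (mul_defined HC E). Qed.

Lemma compose_eq a b c : mul C a b c -> compose a b = c.
Proof.
  intro H. apply (mul_fun HC (compose_spec (mul_match HC H)) H).
Qed.

Lemma compose_non_id x y : ~ isid C x -> tgt C x = src C y -> ~ isid C (compose x y).
Proof. intros Ix E I. apply Ix, (conical_l HC (compose_spec E) I). Qed.

Lemma compose_idl e y : isid C e -> tgt C e = src C y -> compose e y = y.
Proof. intros. apply compose_eq, (mul_idl HC); assumption. Qed.

Lemma compose_idr x e : isid C e -> tgt C x = src C e -> compose x e = x.
Proof. intros. apply compose_eq, (mul_idr HC); assumption. Qed.

Lemma compose_assoc x y z : tgt C x = src C y -> tgt C y = src C z ->
  compose x (compose y z) = compose (compose x y) z.
Proof.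
  intros E1 E2. apply compose_eq.
  apply (mul_assoc HC (compose_spec E1) (compose_spec E2)), compose_spec.
  rewrite (mul_tgt HC (compose_spec E1)). assumption.
Qed.

Fixpoint normal (w : list A) : Prop :=
  match w with
  | [] => True
  | x :: w' => ~ isid C x /\ normal w' /\
      match w' with [] => True | y :: _ => tgt C x <> src C y end
  end.

Definition push (x : A) (w : list A) : list A :=
  if decide (isid C x) then w else
  match w with
  | [] => [x]
  | y :: w' => if decide (tgt C x = src C y) then compose x y :: w' else x :: w
  end.

Definition nf (w : list A) : list A := fold_right push [] w.

Lemma push_id e w : isid C e -> push e w = w.
Proof. intro I. unfold push. destruct (decide (isid C e)); tauto. Qed.

Lemma push_nil x : ~ isid C x -> push x [] = [x].
Proof. intro I. unfold push. destruct (decide (isid C x)); tauto. Qed.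

Lemma push_merge x y w : ~ isid C x -> tgt C x = src C y -> push x (y :: w) = compose x y :: w.
Proof.
  intros I E. unfold push. destruct (decide (isid C x)); [tauto|].
  destruct (decide _); tauto.
Qed.

Lemma push_nomerge x y w : ~ isid C x -> tgt C x <> src C y -> push x (y :: w) = x :: y :: w.
Proof.
  intros I E. unfold push. destruct (decide (isid C x)); [tauto|].
  destruct (decide _); tauto.
Qed.

Lemma push_normal x w : normal w -> normal (push x w).
Proof.
  intro Hw. destruct (decide (isid C x)) as [Ix|Ix]; [rewrite push_id; assumption|].
  destruct w as [|y w']; [rewrite push_nil; simpl; tauto|].
  destruct (decide (tgt C x = src C y)) as [E|E].
  - rewrite push_merge by assumption. simpl in Hw |- *.
    destruct Hw as (_ & Hw' & Hyw). repeat split; auto using compose_non_id.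
    destruct w'; auto. rewrite (mul_tgt HC (compose_spec E)). assumption.
  - rewrite push_nomerge by assumption. simpl in *. tauto.
Qed.

Lemma fold_push_normal W l : normal W -> normal (fold_right push W l).
Proof. intro H; induction l; simpl; auto using push_normal. Qed.

Lemma nf_normal l : normal (nf l).
Proof. apply fold_push_normal. exact I. Qed.

Lemma push_normal_cons x w : normal (x :: w) -> push x w = x :: w.
Proof.
  intros (Ix & _ & Hxw). destruct w as [|y w'].
  - apply push_nil; assumption.
  - apply push_nomerge; assumption.
Qed.

Lemma fold_push_normal_app g w : normal (g ++ w) -> fold_right push w g = g ++ w.
Proof.
  induction g as [|x g IH]; simpl; auto. intro H.
  rewrite IH by (simpl in H; tauto). apply push_normal_cons; assumption.
Qed.

Lemma nf_id w : normal w -> nf w = w.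
Proof.
  intro H. unfold nf. rewrite <- (app_nil_r w) at 2.
  apply fold_push_normal_app. rewrite app_nil_r. assumption.
Qed.

Lemma push_compose x y w : normal w -> tgt C x = src C y ->
  push x (push y w) = push (compose x y) w.
Proof.
  intros Hw E.
  destruct (decide (isid C x)) as [Ix|Ix].
  { rewrite push_id, compose_idl; auto. }
  destruct (decide (isid C y)) as [Iy|Iy].
  { rewrite (push_id w Iy), compose_idr; auto. }
  pose proof (compose_non_id Ix E) as Ixy.
  pose proof (mul_tgt HC (compose_spec E)) as Txy.
  destruct w as [|z w'].
  - rewrite !push_nil, push_merge; auto.
  - destruct (decide (tgt C y = src C z)) as [E2|E2].
    + rewrite push_merge, push_merge, push_merge, compose_assoc; auto; try congruence.
      rewrite (mul_src HC (compose_spec E2)). assumption.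
    + rewrite push_nomerge, push_merge, push_nomerge; auto. congruence.
Qed.

Lemma fold_push_comm x w W : normal w -> normal W ->
  fold_right push W (push x w) = push x (fold_right push W w).
Proof.
  intros Hw HW. destruct (decide (isid C x)) as [Ix|Ix].
  { rewrite !push_id; auto. }
  destruct w as [|y w'].
  - rewrite push_nil; auto.
  - destruct (decide (tgt C x = src C y)) as [E|E].
    + rewrite push_merge by assumption. simpl.
      rewrite push_compose; auto using fold_push_normal.
    + rewrite push_nomerge; auto.
Qed.

Lemma fold_push_nf W l : normal W -> fold_right push W l = fold_right push W (nf l).
Proof.
  intro HW. induction l as [|x l IH]; simpl; auto.
  rewrite fold_push_comm by auto using nf_normal. congruence.
Qed.

Lemma nf_app a b : nf (a ++ b) = fold_right push (nf b) (nf a).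
Proof. unfold nf at 1. rewrite fold_right_app. apply fold_push_nf, nf_normal. Qed.

Lemma cong_push x w : cong R (x :: w) (push x w).
Proof.
  destruct (decide (isid C x)) as [I|I].
  - rewrite push_id by assumption.
    change (cong R ([] ++ [x] ++ w) ([] ++ [] ++ w)). apply cong_base. left. eauto.
  - destruct w as [|y w']; [rewrite push_nil; auto using cong_refl|].
    destruct (decide (tgt C x = src C y)) as [E|E].
    + rewrite push_merge by assumption.
      change (cong R ([] ++ [x; y] ++ w') ([] ++ [compose x y] ++ w')). apply cong_base.
      right; left. exists x, y, (compose x y). auto using compose_spec.
    + rewrite push_nomerge by assumption. apply cong_refl.
Qed.

Lemma cong_nf l : cong R l (nf l).
Proof.
  induction l as [|x l IH]; simpl; [apply cong_refl|].
  apply cong_trans with (x :: nf l); [|apply cong_push].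
  pose proof (cong_app [x] [] IH) as H. rewrite !app_nil_r in H. exact H.
Qed.

Lemma nf_of_cong a b : cong R a b -> nf a = nf b.
Proof.
  induction 1; try congruence.
  unfold nf. rewrite !fold_right_app. f_equal.
  pose proof (nf_normal q) as HW. unfold nf in HW.
  generalize dependent (fold_right push [] q). intros W HW.
  destruct H as [(e & He & -> & ->)|[(x & y & z & Hm & -> & ->)|(x & y & Hxy & -> & ->)]].
  - apply push_id; assumption.
  - simpl. rewrite push_compose, (compose_eq Hm); eauto using mul_match.
  - apply (aeq_eq HC) in Hxy. subst. reflexivity.
Qed.

Lemma cong_nfE a b : cong R a b <-> nf a = nf b.
Proof.
  split; [apply nf_of_cong|]. intro H.
  eapply cong_trans; [apply cong_nf|]. rewrite H. apply cong_sym, cong_nf.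
Qed.

Definition lfactor (g a : A) : Prop := exists y, mul C g y a.

Lemma ldiv_lfactor g a : @ldiv C g a <-> lfactor g a.
Proof.
  split.
  - intros (x & c & H & E). apply (aeq_eq HC) in E. subst. exists x; assumption.
  - intros (x & H). exists x, a. split; [assumption|]. apply (aeq_eq HC). reflexivity.
Qed.

Lemma lfactor_refl a : lfactor a a.
Proof.
  destruct (id_at_tgt HC a) as (e & Ie & Ee). exists e. apply (mul_idr HC); auto.
Qed.

Lemma lfactor_src g a : lfactor g a -> src C a = src C g.
Proof. intros (y & H). exact (mul_src HC H). Qed.

Lemma lfactor_id e a : isid C e -> src C e = src C a -> lfactor e a.
Proof. intros I E. exists a. apply (mul_idl HC); auto. rewrite <- (id_loop HC I). assumption. Qed.

Lemma lfactor_id_inv g e : lfactor g e -> isid C e -> isid C g.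
Proof. intros (y & H) I. exact (conical_l HC H I). Qed.

Inductive prefix : list A -> list A -> Prop :=
| prefix_nil a : prefix [] a
| prefix_last g c a : lfactor g c -> prefix [g] (c :: a)
| prefix_cons c g a : prefix g a -> prefix (c :: g) (c :: a).

Lemma prefix_head y g a : prefix (y :: g) a -> exists c a', a = c :: a' /\ src C c = src C y.
Proof.
  inversion 1; subst; eexists _, _; split; eauto using lfactor_src.
Qed.

Lemma prefix_nil_r h : prefix h [] -> h = [].
Proof. inversion 1; reflexivity. Qed.

Lemma prefix_single h a : prefix h [a] -> h = [] \/ exists g, h = [g] /\ lfactor g a.
Proof.
  inversion 1 as [|g c a' L|c g a' P]; subst; auto.
  - right. exists g; auto.
  - rewrite (prefix_nil_r P). right. exists a; auto using lfactor_refl.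
Qed.

Lemma push_head x w : ~ isid C x -> normal w ->
  exists c w', push x w = c :: w' /\ lfactor x c.
Proof.
  intros Ix Hw. destruct w as [|y w'].
  - rewrite push_nil by assumption. eauto using lfactor_refl.
  - destruct (decide (tgt C x = src C y)) as [E|E].
    + rewrite push_merge by assumption. eexists _, _. split; [reflexivity|].
      exists y. apply compose_spec; assumption.
    + rewrite push_nomerge by assumption. eauto using lfactor_refl.
Qed.

Lemma prefix_fold g x : normal g -> normal x -> prefix g (fold_right push x g).
Proof.
  induction g as [|y g IH]; intros Hg Hx; [constructor|]. simpl.
  destruct Hg as (Iy & Hg & Hyg). destruct g as [|y' g'].
  - simpl. destruct (push_head Iy Hx) as (c & w' & -> & L). constructor; assumption.
  - pose proof (IH Hg Hx) as P. destruct (prefix_head P) as (c & a' & E & Es).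
    rewrite E in P |- *. rewrite push_nomerge by congruence. constructor; assumption.
Qed.

Lemma fold_of_prefix g a : normal g -> normal a -> prefix g a ->
  exists x, normal x /\ fold_right push x g = a.
Proof.
  intros Hg Ha P. induction P as [a|g c a (y & Hm)|c g a P IH].
  - exists a. auto.
  - assert (Ig : ~ isid C g) by (simpl in Hg; tauto).
    destruct (decide (isid C y)) as [Iy|Iy].
    + assert (c = g) by exact (mul_fun HC Hm (mul_idr HC Iy (mul_match HC Hm))). subst c.
      exists a. split; [simpl in Ha; tauto|]. apply push_normal_cons; assumption.
    + exists (y :: a). split.
      * simpl in Ha |- *. destruct Ha as (_ & Ha & Hca). repeat split; auto.
        destruct a; auto. rewrite <- (mul_tgt HC Hm). assumption.
      * simpl. rewrite push_merge, (compose_eq Hm); eauto using mul_match.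
  - destruct IH as (x & Hx & E); [simpl in Hg, Ha; tauto ..|].
    exists x. split; [assumption|]. simpl. rewrite E. apply push_normal_cons; assumption.
Qed.

Lemma umon_ldivE g a : @ldiv (monoid_cat R) g a <-> prefix (nf g) (nf a).
Proof.
  split.
  - intros (x & c & Hc & Hca). simpl in Hc, Hca. subst c.
    apply cong_nfE in Hca. rewrite <- Hca, nf_app. apply prefix_fold; apply nf_normal.
  - intro P. destruct (fold_of_prefix (nf_normal g) (nf_normal a) P) as (x & Hx & E).
    exists x, (g ++ x). split; [reflexivity|]. simpl.
    apply cong_nfE. rewrite nf_app, (nf_id Hx). assumption.
Qed.

Lemma common_prefix_same c a b h : prefix h (c :: a) -> prefix h (c :: b) ->
  h = [] \/ (exists g, h = [g] /\ lfactor g c) \/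
  exists h', h = c :: h' /\ prefix h' a /\ prefix h' b.
Proof.
  intros P1 P2. inversion P1 as [|g c1 a1 L1|c1 h' a1 P1']; subst; eauto.
  inversion P2 as [|g c2 b2 L2|c2 h2 b2 P2']; subst.
  - right; left. exists c. auto using lfactor_refl.
  - right; right. eauto.
Qed.

Lemma common_prefix_distinct c d a b h : c <> d ->
  prefix h (c :: a) -> prefix h (d :: b) ->
  h = [] \/ exists g, h = [g] /\ lfactor g c /\ lfactor g d.
Proof.
  intros N P1 P2. inversion P1 as [|g c1 a1 L1|c1 h' a1 P1']; subst; auto.
  - inversion P2; subst; right; eauto using lfactor_refl.
  - inversion P2; subst; [|congruence]. right. exists c. auto using lfactor_refl.
Qed.

Lemma prefix_push_single e c a : lfactor e c -> prefix (push e []) (c :: a).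
Proof.
  intro L. destruct (decide (isid C e)) as [I|I].
  - rewrite push_id by assumption. constructor.
  - rewrite push_nil by assumption. constructor; assumption.
Qed.

Lemma prefix_gcd : left_gcds C -> forall a b, normal a -> normal b ->
  exists g, normal g /\ prefix g a /\ prefix g b /\
    forall h, normal h -> prefix h a -> prefix h b -> prefix h g.
Proof.
  intros LG a. induction a as [|c a IH]; intros b Ha Hb.
  { exists []. repeat split; try constructor.
    intros h _ P _. rewrite (prefix_nil_r P). constructor. }
  destruct b as [|d b].
  { exists []. repeat split; try constructor.
    intros h _ _ P. rewrite (prefix_nil_r P). constructor. }
  destruct (classic (c = d)) as [<-|N].
  - destruct (IH b) as (g & Hg & Pa & Pb & Gr); [simpl in Ha, Hb; tauto ..|].
    exists (c :: g). split; [|split; [constructor; assumption|split; [constructor; assumption|]]].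
    + simpl in Ha |- *. repeat split; try tauto.
      destruct g as [|y g']; [exact I|].
      destruct (prefix_head Pa) as (c' & a' & -> & E). rewrite <- E. tauto.
    + intros h Hh P1 P2.
      destruct (common_prefix_same P1 P2) as [->|[(g' & -> & L)|(h' & -> & P1' & P2')]];
        constructor; auto.
      apply Gr; auto. simpl in Hh; tauto.
  - destruct (classic (src C c = src C d)) as [Es|Ns].
    + destruct (LG c d Es) as (e & L1 & L2 & Ge). rewrite ldiv_lfactor in L1, L2.
      exists (push e []).
      split; [apply push_normal; exact I|split; [|split]]; auto using prefix_push_single.
      intros h Hh P1 P2.
      destruct (common_prefix_distinct N P1 P2) as [->|(g & -> & Lc & Ld)]; [constructor|].
      assert (Lg : lfactor g e) by (apply ldiv_lfactor, Ge; apply ldiv_lfactor; assumption).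
      destruct (decide (isid C e)) as [I|I].
      * exfalso. simpl in Hh. apply Hh, (lfactor_id_inv Lg I).
      * rewrite push_nil by assumption. constructor; assumption.
    + exists []. repeat split; try constructor.
      intros h _ P1 P2.
      destruct (common_prefix_distinct N P1 P2) as [->|(g & -> & Lc & Ld)]; [constructor|].
      exfalso. apply Ns. rewrite (lfactor_src Lc), (lfactor_src Ld). reflexivity.
Qed.

Lemma left_gcds_lfactor :
  (forall a b, src C a = src C b -> exists g, lfactor g a /\ lfactor g b /\
     forall h, lfactor h a -> lfactor h b -> lfactor h g) -> left_gcds C.
Proof. intros H a b E. setoid_rewrite ldiv_lfactor. apply H, E. Qed.

Lemma push_inj x V W : left_cancellative C -> ~ isid C x -> normal V -> normal W ->
  push x V = push x W -> V = W.
Proof.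
  intros LC Ix HV HW E.
  assert (Lx : forall y y' c, mul C x y c -> mul C x y' c -> y = y').
  { intros y y' c H1 H2. apply (aeq_eq HC). eapply LC; eauto; apply (aeq_eq HC); reflexivity. }
  destruct (id_at_tgt HC x) as (e & Ie & Ee).
  (* a letter of a normal word is not an identity, so it cannot be absorbed by [x] *)
  assert (K : forall y w, normal (y :: w) -> tgt C x = src C y -> compose x y <> x).
  { intros y w (Iy & _) Ey Ec. apply Iy. replace y with e; [assumption|].
    apply (Lx e y x); [apply (mul_idr HC); auto|].
    rewrite <- Ec at 2. apply compose_spec; assumption. }
  destruct V as [|y V']; destruct W as [|z W']; [reflexivity| | |].
  - rewrite push_nil in E by assumption. destruct (decide (tgt C x = src C z)) as [Ez|Ez].
    + rewrite push_merge in E by assumption. injection E; intros. exfalso; apply (K z W'); auto.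
    + rewrite push_nomerge in E by assumption. discriminate.
  - rewrite (push_nil Ix) in E. destruct (decide (tgt C x = src C y)) as [Ey|Ey].
    + rewrite push_merge in E by assumption. injection E; intros. exfalso; apply (K y V'); auto.
    + rewrite push_nomerge in E by assumption. discriminate.
  - destruct (decide (tgt C x = src C y)) as [Ey|Ey];
      destruct (decide (tgt C x = src C z)) as [Ez|Ez].
    + rewrite !push_merge in E by assumption. injection E as E1 E2. subst W'. f_equal.
      apply (Lx y z (compose x z)); [rewrite <- E1|]; apply compose_spec; assumption.
    + rewrite push_merge, push_nomerge in E by assumption. injection E; intros.
      exfalso; apply (K y V'); auto.
    + rewrite push_nomerge, push_merge in E by assumption. injection E; intros.
      exfalso; apply (K z W'); auto.
    + rewrite !push_nomerge in E by assumption. congruence.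
Qed.

Lemma fold_push_inj g X Y : left_cancellative C -> normal g -> normal X -> normal Y ->
  fold_right push X g = fold_right push Y g -> X = Y.
Proof.
  intro LC. induction g as [|x g IH]; simpl; auto. intros (Ix & Hg & _) HX HY E.
  apply IH; auto. eapply push_inj; eauto; apply fold_push_normal; assumption.
Qed.

Lemma umon_conical : conical (monoid_cat R).
Proof.
  intros x y e He Ie. simpl in *. subst e. apply cong_nfE. apply cong_nfE in Ie.
  simpl in Ie |- *. rewrite nf_app in Ie. destruct (nf x) as [|c w] eqn:F; [reflexivity|].
  exfalso. pose proof (nf_normal x) as Hx. rewrite F in Hx. simpl in Ie.
  destruct (push_head (proj1 Hx) (fold_push_normal w (nf_normal y)))
    as (c' & w' & E & _).
  congruence.
Qed.

Lemma umon_left_cancellative : left_cancellative C -> left_cancellative (monoid_cat R).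
Proof.
  intros LC a a' x y c d Hc Hd Ha Hcd. simpl in *. subst.
  apply cong_nfE. apply cong_nfE in Ha, Hcd. rewrite !nf_app, Ha in Hcd.
  eapply fold_push_inj; eauto; apply nf_normal.
Qed.

Lemma umon_left_gcds : left_gcds C -> left_gcds (monoid_cat R).
Proof.
  intros LG a b _. destruct (prefix_gcd LG (nf_normal a) (nf_normal b)) as (g & Hg & P1 & P2 & Gr).
  exists g. rewrite !umon_ldivE, (nf_id Hg). split; [|split]; auto.
  intros h H1 H2. rewrite umon_ldivE in H1, H2 |- *. rewrite (nf_id Hg).
  apply Gr; auto using nf_normal.
Qed.

Lemma nf_single x : ~ isid C x -> nf [x] = [x].
Proof. intro I. apply nf_id. simpl. tauto. Qed.

Lemma left_gcds_of_umon : left_gcds (monoid_cat R) -> left_gcds C.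
Proof.
  intros LG a b E. setoid_rewrite ldiv_lfactor.
  destruct (decide (isid C a)) as [Ia|Ia].
  { exists a. split; [apply lfactor_refl|split; [apply lfactor_id|]]; auto. }
  destruct (decide (isid C b)) as [Ib|Ib].
  { exists b. split; [apply lfactor_id|split; [apply lfactor_refl|]]; auto. }
  destruct (LG [a] [b] eq_refl) as (g & L1 & L2 & Gr).
  rewrite umon_ldivE, nf_single in L1, L2 by assumption.
  assert (Hn : forall h, ~ isid C h -> lfactor h a -> lfactor h b -> prefix [h] (nf g)).
  { intros h Ih H1 H2. rewrite <- (nf_single Ih). apply umon_ldivE, Gr;
      apply umon_ldivE; rewrite !nf_single by assumption; constructor; assumption. }
  destruct (prefix_single L1) as [F|(g1 & F & Ga)]; rewrite F in L2, Hn.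
  - destruct (id_at_src HC a) as (e & Ie & Ee). exists e.
    split; [apply lfactor_id|split; [apply lfactor_id; congruence|]]; auto.
    intros h H1 H2. destruct (decide (isid C h)) as [Ih|Ih].
    + apply lfactor_id; auto. rewrite Ee, (lfactor_src H1). reflexivity.
    + exfalso. pose proof (prefix_nil_r (Hn h Ih H1 H2)). discriminate.
  - destruct (prefix_single L2) as [|(g2 & F2 & Gb)]; [discriminate|].
    injection F2 as <-. exists g1. split; [|split]; auto.
    intros h H1 H2. destruct (decide (isid C h)) as [Ih|Ih].
    + apply lfactor_id; auto. rewrite <- (lfactor_src Ga). symmetry. exact (lfactor_src H1).
    + destruct (prefix_single (Hn h Ih H1 H2)) as [|(h' & Eh & L)]; [discriminate|].
      injection Eh as <-. assumption.
Qed.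

End NormalForm.

(** * Duality *)

Definition op_cat (C : ACat) : ACat :=
  {| Arr := Arr C; Ob := Ob C; src := tgt C; tgt := src C; aeq := aeq C; isid := isid C;
     mul := fun a b c => mul C b a c |}.

Lemma conical_category_op C : conical_category C -> conical_category (op_cat C).
Proof.
  intros [Heq Hm Hd Hf Hs Ht Hl Hit His Hil Hir Ha Hcl Hcr].
  constructor; simpl.
  - exact Heq.
  - intros a b c H. symmetry. eapply Hm; eauto.
  - intros a b H. apply Hd. auto.
  - exact (fun a b => Hf b a).
  - intros a b c H. eapply Ht; eauto.
  - intros a b c H. eapply Hs; eauto.
  - intros e I. symmetry; auto.
  - intros a. destruct (His a) as (e & I & E). exists e. split; auto. rewrite <- Hl; auto.
  - intros a. destruct (Hit a) as (e & I & E). exists e. split; auto. rewrite <- Hl; auto.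
  - intros e b I E. apply Hir; auto.
  - intros a e I E. apply Hil; auto.
  - intros a b c ab bc abc H1 H2 H3.
    destruct (Hd bc a) as [w Hw]. { rewrite (Ht _ _ _ H2). eapply Hm; eauto. }
    rewrite (Hf _ _ _ _ H3 (Ha _ _ _ _ _ _ H2 H1 Hw)). assumption.
  - intros a b c H I. eapply Hcr; eauto.
  - intros a b c H I. eapply Hcl; eauto.
Qed.

Lemma Umon_rel_op C a b :
  (@Umon_rel C a b -> @Umon_rel (op_cat C) (rev a) (rev b)) /\
  (@Umon_rel (op_cat C) a b -> @Umon_rel C (rev a) (rev b)).
Proof.
  split; intros [(e & I & -> & ->)|[(x & y & z & H & -> & ->)|(x & y & H & -> & ->)]]; simpl;
    first [left; eauto; fail | right; left; exists y, x, z; auto; fail | right; right; eauto].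
Qed.

Lemma cong_rev (G : Type) (R1 R2 : list G -> list G -> Prop) :
  (forall a b, R1 a b -> R2 (rev a) (rev b)) ->
  forall a b, cong R1 a b -> cong R2 (rev a) (rev b).
Proof.
  intros H a b Hc. induction Hc.
  - rewrite !rev_app_distr, <- !app_assoc. apply cong_base. auto.
  - apply cong_refl.
  - apply cong_sym; assumption.
  - eapply cong_trans; eassumption.
Qed.

Lemma cong_Umon_rel_op C a b :
  cong (@Umon_rel C) a b <-> cong (@Umon_rel (op_cat C)) (rev a) (rev b).
Proof.
  split.
  - apply cong_rev. intros x y. apply Umon_rel_op.
  - intro H. rewrite <- (rev_involutive a), <- (rev_involutive b). revert H.
    apply cong_rev. intros x y. apply Umon_rel_op.
Qed.

Section Reversal.
Variables (G : Type) (R R' : list G -> list G -> Prop).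
Hypothesis cong_revE : forall a b, cong R a b <-> cong R' (rev a) (rev b).

Lemma ldiv_rev g a : @ldiv (monoid_cat R') (rev g) (rev a) <-> @rdiv (monoid_cat R) g a.
Proof.
  split; intros (x & c & Ec & Hc); simpl in *; subst c.
  - exists (rev x), (rev x ++ g). split; [reflexivity|]. simpl.
    apply cong_revE. rewrite rev_app_distr, rev_involutive. assumption.
  - exists (rev x), (rev g ++ rev x). split; [reflexivity|]. simpl.
    rewrite <- rev_app_distr. apply cong_revE. assumption.
Qed.

Lemma left_gcds_rev : left_gcds (monoid_cat R') -> right_gcds (monoid_cat R).
Proof.
  intros LG a b _. setoid_rewrite <- ldiv_rev.
  destruct (LG (rev a) (rev b) eq_refl) as (g & L1 & L2 & Gr).
  exists (rev g). rewrite rev_involutive. auto.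
Qed.

Lemma right_gcds_rev : right_gcds (monoid_cat R) -> left_gcds (monoid_cat R').
Proof.
  intros RG a b _. destruct (RG (rev a) (rev b) eq_refl) as (g & L1 & L2 & Gr).
  rewrite <- !ldiv_rev, !rev_involutive in L1, L2.
  exists (rev g). split; [|split]; auto.
  intros h H1 H2. rewrite <- (rev_involutive h), <- (rev_involutive a) in H1.
  rewrite <- (rev_involutive h), <- (rev_involutive b) in H2.
  rewrite <- (rev_involutive h). apply ldiv_rev, Gr; apply ldiv_rev; assumption.
Qed.

Lemma right_cancellative_rev :
  left_cancellative (monoid_cat R') -> right_cancellative (monoid_cat R).
Proof.
  intros LC a a' x y c d Hc Hd Ha Hcd. simpl in *. subst. apply cong_revE.
  apply cong_revE in Ha. apply cong_revE in Hcd. rewrite !rev_app_distr in Hcd.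
  eapply (LC (rev a) (rev a') (rev x) (rev y)); simpl; eauto.
Qed.

End Reversal.

Lemma umon_gcd_monoid C : conical_category C -> is_gcd_category C -> is_gcd_monoid (@Umon_rel C).
Proof.
  intros HC (_ & LC & RC & LG & RG).
  pose proof (conical_category_op HC) as HCo.
  pose proof (@cong_Umon_rel_op C) as Hr.
  repeat split.
  - apply umon_conical; assumption.
  - apply umon_left_cancellative; assumption.
  - exact (right_cancellative_rev Hr (umon_left_cancellative HCo RC)).
  - apply umon_left_gcds; assumption.
  - exact (left_gcds_rev Hr (umon_left_gcds HCo RG)).
Qed.

Lemma gcds_of_umon C : conical_category C -> is_gcd_monoid (@Umon_rel C) ->
  left_gcds C /\ right_gcds C.
Proof.
  intros HC (_ & _ & _ & LG & RG). split.
  - apply left_gcds_of_umon; assumption.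
  - apply (left_gcds_of_umon (conical_category_op HC)).
    apply (right_gcds_rev (@cong_Umon_rel_op C)). assumption.
Qed.

(** * Posets as categories *)

Section PosetCategory.
Variables (T : Type) (le : T -> T -> Prop).
Hypothesis Hp : is_poset le.

Definition meets_above : Prop :=
  forall x y y', le x y -> le x y' -> exists w, le x w /\ le w y /\ le w y' /\
    forall w', le x w' -> le w' y -> le w' y' -> le w' w.

Definition joins_below : Prop :=
  forall y y' x, le y x -> le y' x -> exists w, le y w /\ le y' w /\ le w x /\
    forall w', le y w' -> le y' w' -> le w' x -> le w w'.

Definition poset_cat : ACat :=
  {| Arr := IGen le; Ob := T;
     src := fun a => fst (proj1_sig a); tgt := fun a => snd (proj1_sig a);
     aeq := eq; isid := fun a => fst (proj1_sig a) = snd (proj1_sig a);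
     mul := fun a b c => snd (proj1_sig a) = fst (proj1_sig b) /\
                         proj1_sig c = (fst (proj1_sig a), snd (proj1_sig b)) |}.

Definition interval x y (h : le x y) : IGen le := exist (fun p => le (fst p) (snd p)) (x, y) h.

Lemma IGen_eq (a b : IGen le) : proj1_sig a = proj1_sig b -> a = b.
Proof. destruct a as [p h], b as [q k]; simpl. intros ->. f_equal. apply proof_irrelevance. Qed.

Lemma poset_cat_category : conical_category poset_cat.
Proof.
  destruct Hp as (Hrefl & Hanti & Htrans).
  constructor; simpl.
  - tauto.
  - tauto.
  - intros [[x y] h] [[y' z] k]; simpl. intros ->. exists (interval (Htrans _ _ _ h k)). auto.
  - intros a b c c' (_ & E1) (_ & E2). apply IGen_eq. congruence.
  - intros a b c (_ & E). rewrite E. reflexivity.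
  - intros a b c (_ & E). rewrite E. reflexivity.
  - auto.
  - intros [[x y] h]. exists (interval (Hrefl y)). auto.
  - intros [[x y] h]. exists (interval (Hrefl x)). auto.
  - intros [[x y] h] [[y' z] k]; simpl. intros E1 E2. split; [|f_equal]; congruence.
  - intros [[x y] h] [[y' z] k]; simpl. intros E1 E2. split; [|f_equal]; congruence.
  - intros [[x1 y1] h1] [[x2 y2] h2] [[x3 y3] h3] [[a1 a2] ha] [[b1 b2] hb] [[c1 c2] hc]; simpl.
    intros (E1 & E2) (E3 & E4) (E5 & E6).
    injection E2; injection E4; injection E6; intros; subst. auto.
  - intros [[x1 y1] h1] [[x2 y2] h2] [[x3 y3] h3]; simpl. intros (E1 & E2) E3.
    injection E2; intros; subst. auto.
  - intros [[x1 y1] h1] [[x2 y2] h2] [[x3 y3] h3]; simpl. intros (E1 & E2) E3.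
    injection E2; intros; subst. auto.
Qed.

Lemma monoid_cat_interval : monoid_cat (@interval_rel T le) = monoid_cat (@Umon_rel poset_cat).
Proof.
  apply monoid_cat_ext.
  - intros a b [(x & h & -> & ->)|(x & y & z & hxy & hyz & hxz & -> & ->)].
    + apply cong_of_rel. left. exists (interval h). simpl. auto.
    + apply cong_sym, cong_of_rel. right; left.
      exists (interval hxy), (interval hyz), (interval hxz). simpl. auto.
  - intros a b [(e & I & -> & ->)|[(x & y & z & H & -> & ->)|(x & y & H & -> & ->)]].
    + destruct e as [[x y] h]. simpl in I. subst y. apply cong_of_rel. left. eauto.
    + destruct x as [[x1 x2] h1], y as [[y1 y2] h2], z as [[z1 z2] h3]. simpl in H.
      destruct H as (E1 & E2). injection E2; intros; subst. apply cong_sym, cong_of_rel.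
      right. exists x1, y1, y2, h1, h2, h3. auto.
    + simpl in H. subst. apply cong_refl.
Qed.

Lemma lfactor_interval g x y (h : le x y) :
  @lfactor poset_cat g (interval h) <-> fst (proj1_sig g) = x /\ le (snd (proj1_sig g)) y.
Proof.
  destruct g as [[g1 g2] hg]; simpl. split.
  - intros ([[z1 z2] hz] & E1 & E2). simpl in *. injection E2; intros; subst. auto.
  - intros (-> & H). exists (interval H). simpl. auto.
Qed.

Lemma rfactor_interval g x y (h : le x y) :
  @lfactor (op_cat poset_cat) g (interval h) <-> snd (proj1_sig g) = y /\ le x (fst (proj1_sig g)).
Proof.
  destruct g as [[g1 g2] hg]; simpl. split.
  - intros ([[z1 z2] hz] & E1 & E2). simpl in *. injection E2; intros; subst. auto.
  - intros (-> & H). exists (interval H). simpl. auto.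
Qed.

Lemma meets_above_of_left_gcds : left_gcds poset_cat -> meets_above.
Proof.
  intros LG x y y' h h'. pose proof poset_cat_category as HC.
  destruct (LG (interval h) (interval h') eq_refl) as (g & G1 & G2 & Gr).
  rewrite (ldiv_lfactor HC), lfactor_interval in G1, G2.
  destruct g as [[g1 w] hg]; simpl in *. destruct G1 as (-> & H1), G2 as (_ & H2).
  exists w. repeat split; auto.
  intros w' K1 K2 K3.
  assert (L : @lfactor poset_cat (interval K1) (interval hg)).
  { apply (ldiv_lfactor HC), Gr; apply (ldiv_lfactor HC), lfactor_interval; auto. }
  apply lfactor_interval in L. apply L.
Qed.

Lemma joins_below_of_right_gcds : right_gcds poset_cat -> joins_below.
Proof.
  intros RG y y' x h h'. pose proof (conical_category_op poset_cat_category) as HC.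
  destruct (RG (interval h) (interval h') eq_refl) as (g & G1 & G2 & Gr).
  apply (ldiv_lfactor HC) in G1, G2. rewrite rfactor_interval in G1, G2.
  destruct g as [[w g2] hg]; simpl in *. destruct G1 as (-> & H1), G2 as (_ & H2).
  exists w. repeat split; auto.
  intros w' K1 K2 K3.
  assert (L : @lfactor (op_cat poset_cat) (interval K3) (interval hg)).
  { apply (ldiv_lfactor HC), Gr; apply (ldiv_lfactor HC), rfactor_interval; auto. }
  apply rfactor_interval in L. apply L.
Qed.

Lemma interval_monoid_lattice :
  is_gcd_monoid (@interval_rel T le) -> meets_above /\ joins_below.
Proof.
  unfold is_gcd_monoid. rewrite monoid_cat_interval. intro HM.
  destruct (gcds_of_umon poset_cat_category HM) as (LG & RG).
  split; [apply meets_above_of_left_gcds | apply joins_below_of_right_gcds]; assumption.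
Qed.

End PosetCategory.

(** * The category C(P,u,v) *)

Section Spindle.
Variables (T : Type) (le : T -> T -> Prop) (u v : T).
Hypothesis Hp : is_poset le.
Hypothesis Hs : extreme_spindle le u v.

Let le_refl x : le x x := proj1 Hp x.
Let le_trans x y z : le x y -> le y z -> le x z := proj2 (proj2 Hp) x y z.

Local Notation CA := (CArr le u v).
Local Notation open := (open_int le u v).

Lemma le_uv : le u v.
Proof. apply Hs. Qed.

Lemma u_neq_v : u <> v.
Proof. apply Hs. Qed.

Lemma minimal_u x : le x u -> x = u.
Proof. apply Hs. Qed.

Lemma maximal_v x : le v x -> x = v.
Proof. apply Hs. Qed.

Lemma open_intro z : le u z -> z <> u -> le z v -> z <> v -> open z.
Proof. intros. split; split; auto. Qed.

Lemma open_not_u w : open w -> w <> u.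
Proof. intros ((_ & N) & _) E. apply N. symmetry. assumption. Qed.

Lemma open_not_v w : open w -> w <> v.
Proof. intros (_ & (_ & N)). assumption. Qed.

Definition chain_through (y : T) (t : T) : Prop :=
  t = u \/ t = v \/ (open t /\ comparable le y t).

Lemma maxchain_chain_through y : open y -> maxchain le u v (chain_through y).
Proof.
  intro Hy. destruct Hs as ((_ & _ & Er & Es & Et) & _).
  assert (Hc : forall t, open t -> closed_int le u v t)
    by (intros t ((? & _) & (? & _)); split; auto).
  assert (Hu : closed_int le u v u) by (split; auto using le_uv).
  assert (Hv : closed_int le u v v) by (split; auto using le_uv).
  split; [split|].
  - intros x [->|[->|(Ho & _)]]; auto.
  - intros x z [->|[->|(Hxo & Hxc)]] Hz.
    + left. destruct Hz as [->|[->|(Ho & _)]]; [apply le_refl|apply le_uv|apply Hc, Ho].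
    + right. destruct Hz as [->|[->|(Ho & _)]]; [apply le_uv|apply le_refl|apply Hc, Ho].
    + destruct Hz as [->|[->|(Hzo & Hzc)]].
      * right. apply Hc, Hxo.
      * left. apply Hc, Hxo.
      * eapply Et; eauto.
  - intros Z' (C1 & C2) Hsub t Ht.
    destruct (classic (t = u)) as [->|Nu]; [left; reflexivity|].
    destruct (classic (t = v)) as [->|Nv]; [right; left; reflexivity|].
    right; right. destruct (C1 t Ht) as (H1 & H2). split; [apply open_intro; auto|].
    apply C2; auto. apply Hsub. right; right. auto.
Qed.

Lemma maxchain_through Z y : maxchain le u v Z -> Z y -> open y ->
  forall t, Z t <-> chain_through y t.
Proof.
  intros (CH & MX) Zy Hy t. split.
  - intro Zt. destruct (classic (t = u)) as [->|Nu]; [left; reflexivity|].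
    destruct (classic (t = v)) as [->|Nv]; [right; left; reflexivity|].
    right; right. destruct (proj1 CH t Zt) as (H1 & H2).
    split; [apply open_intro; auto|]. apply (proj2 CH); auto.
  - apply (MX (chain_through y)); [apply maxchain_chain_through; assumption|].
    intros x Zx. destruct (classic (x = u)) as [->|Nu]; [left; reflexivity|].
    destruct (classic (x = v)) as [->|Nv]; [right; left; reflexivity|].
    right; right. destruct (proj1 CH x Zx) as (H1 & H2).
    split; [apply open_intro; auto|]. apply (proj2 CH); auto.
Qed.

Lemma maxchain_unique Z Z' y : maxchain le u v Z -> maxchain le u v Z' -> Z y -> Z' y -> open y ->
  forall t, Z t <-> Z' t.
Proof.
  intros M M' H H' Hy t. rewrite (maxchain_through M H Hy), (maxchain_through M' H' Hy). tauto.
Qed.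

Lemma maxchain_comparable Z y t : maxchain le u v Z -> Z y -> open y -> open t ->
  comparable le y t -> Z t.
Proof. intros M Zy Hy Ht C. apply (maxchain_through M Zy Hy). right; right; auto. Qed.

Lemma CIv_irrel x y h n h' n' : @CIv T le u v x y h n = @CIv T le u v x y h' n'.
Proof. f_equal; apply proof_irrelevance. Qed.

Lemma CCh_ext Z hZ Z' hZ' : (forall t, Z t <-> Z' t) -> @CCh T le u v Z hZ = @CCh T le u v Z' hZ'.
Proof.
  intro E. assert (Z = Z') as <-.
  { apply functional_extensionality; intro t. apply propositional_extensionality; auto. }
  f_equal; apply proof_irrelevance.
Qed.

Lemma Caeq_eq (a b : CA) : Caeq a b <-> a = b.
Proof.
  split.
  - destruct a, b; simpl; try tauto; [intros (-> & ->); apply CIv_irrel|apply CCh_ext].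
  - intros ->. destruct b; simpl; tauto.
Qed.

Lemma diag_neq_uv x : (x, x) <> (u, v).
Proof. intro E. injection E; intros. apply u_neq_v; congruence. Qed.

Definition Cunit (x : T) : CA := CIv (le_refl x) (@diag_neq_uv x).

Lemma Cmul_defined (a b : CA) : Ctgt a = Csrc b -> exists c, Cmul a b c.
Proof.
  destruct a as [x y h n|Z hZ], b as [y' z h' n'|Z' hZ']; simpl; intro E.
  - subst y'. destruct (classic ((x, z) = (u, v))) as [E|N].
    + injection E as -> ->.
      assert (Ho : open y).
      { apply open_intro; auto; intros ->; [apply n'|apply n]; reflexivity. }
      exists (CCh (maxchain_chain_through Ho)).
      apply Cmul_split; try apply Ho. right; right. split; [assumption|left; apply le_refl].
    + exists (CIv (le_trans h h') N). apply Cmul_iv.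
  - subst y. pose proof (minimal_u h). subst x. exists (CCh hZ'). apply Cmul_idl. tauto.
  - subst y'. pose proof (maximal_v h'). subst z. exists (CCh hZ). apply Cmul_idr. tauto.
  - exfalso. apply u_neq_v. symmetry. assumption.
Qed.

Lemma Cmul_fun (a b c c' : CA) : Cmul a b c -> Cmul a b c' -> c = c'.
Proof.
  intros H1 H2. apply Caeq_eq.
  destruct H1; inversion H2; subst; simpl; auto;
    try (intro t; match goal with H : forall t, _ <-> _, H' : forall t, _ <-> _ |- _ =>
                                   rewrite <- H, <- H'; tauto end).
  eapply maxchain_unique; eauto. split; eauto.
Qed.

Lemma Cmul_unit_l (e b : CA) : Cisid e -> Ctgt e = Csrc b -> Cmul e b b.
Proof.
  destruct e as [x y h n|]; simpl; [|tauto]. intros ->.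
  destruct b as [y' z h' n'|Z hZ]; simpl; intros ->; [apply Cmul_iv|apply Cmul_idl; tauto].
Qed.

Lemma Cmul_unit_r (a e : CA) : Cisid e -> Ctgt a = Csrc e -> Cmul a e a.
Proof.
  destruct e as [x y h n|]; simpl; [|tauto]. intros ->.
  destruct a as [w z h' n'|Z hZ]; simpl; intros <-; [apply Cmul_iv|apply Cmul_idr; tauto].
Qed.

End Spindle.

(* Outside the section, so that [inversion] may substitute [u] and [v]. *)
Lemma Cmul_assoc (T : Type) (le : T -> T -> Prop) (u v : T) :
  is_poset le -> extreme_spindle le u v -> forall (a b c ab bc abc : CArr le u v),
  Cmul a b ab -> Cmul b c bc -> Cmul ab c abc -> Cmul a bc abc.
Proof.
  intros Hp Hs a b c ab bc abc H1 H2 H3. destruct H1; inversion H2; subst; inversion H3; subst.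
  all: try apply Cmul_iv.
  (* [u,y][y,z][z,v]: the chain split at [z] also passes through [y <= z]. *)
  - assert (Ny : y <> z0).
    { intro E. subst y. pose proof (maximal_v Hs h2). subst z. destruct H7; congruence. }
    assert (Nx : x <> y) by (intro E; subst y; apply n6; reflexivity).
    assert (Hy : open_int le x z0 y) by (split; split; auto).
    apply Cmul_split; try apply Hy.
    apply (maxchain_comparable Hp Hs hZ H8 (conj H5 H7) Hy (or_intror h2)).
  - apply Cmul_idl. intro t. rewrite <- H5, <- H1. tauto.
  - exfalso. pose proof (minimal_u Hs h1). subst x. apply n8. reflexivity.
  - apply Cmul_idl. apply (maxchain_unique Hp Hs hZ hZ0 H7 H10). split; auto.
  - apply Cmul_idl. intro t. rewrite <- H4, <- H, H1. tauto.
  - apply Cmul_idr. intro t. rewrite <- H4, <- H. tauto.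
  - exfalso. destruct H4; congruence.
  - apply Cmul_split; auto. apply H6; auto.
  - apply Cmul_idl. intro t.
    repeat match goal with H : forall t, _ <-> _ |- _ => pose proof (H t); clear H end; tauto.
Qed.

Lemma Cmul_cancel_l (T : Type) (le : T -> T -> Prop) (u v : T) (a x y c : CArr le u v) :
  Cmul a x c -> Cmul a y c -> x = y.
Proof.
  intros H1 H2. inversion H1; subst; inversion H2; subst.
  all: try apply CIv_irrel.
  all: try (exfalso; match goal with N : ?p <> ?p |- _ => apply N; reflexivity end).
  all: apply CCh_ext; intro t;
    repeat match goal with H : forall t, _ <-> _ |- _ => pose proof (H t); clear H end; tauto.
Qed.

Lemma Cmul_cancel_r (T : Type) (le : T -> T -> Prop) (u v : T) (a x y c : CArr le u v) :
  Cmul x a c -> Cmul y a c -> x = y.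
Proof.
  intros H1 H2. inversion H1; subst; inversion H2; subst.
  all: try apply CIv_irrel.
  all: try (exfalso; match goal with N : ?p <> ?p |- _ => apply N; reflexivity end).
  all: apply CCh_ext; intro t;
    repeat match goal with H : forall t, _ <-> _ |- _ => pose proof (H t); clear H end; tauto.
Qed.

Lemma Ccat_left_cancellative (T : Type) (le : T -> T -> Prop) (u v : T) :
  left_cancellative (Ccat le u v).
Proof.
  intros a a' x y c d H1 H2 Ea Ec. simpl in *. apply Caeq_eq in Ea, Ec. subst.
  apply Caeq_eq. exact (Cmul_cancel_l H1 H2).
Qed.

Lemma Ccat_right_cancellative (T : Type) (le : T -> T -> Prop) (u v : T) :
  right_cancellative (Ccat le u v).
Proof.
  intros a a' x y c d H1 H2 Ea Ec. simpl in *. apply Caeq_eq in Ea, Ec. subst.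
  apply Caeq_eq. exact (Cmul_cancel_r H1 H2).
Qed.

Section SpindleCategory.
Variables (T : Type) (le : T -> T -> Prop) (u v : T).
Hypothesis Hp : is_poset le.
Hypothesis Hs : extreme_spindle le u v.

Local Notation CA := (CArr le u v).
Local Notation K := (Ccat le u v).
Local Notation open := (open_int le u v).
Local Notation lfactorK := (@lfactor K).
Local Notation rfactorK := (@lfactor (op_cat K)).

Let le_antisym x y : le x y -> le y x -> x = y := proj1 (proj2 Hp) x y.

Lemma Ccat_category : conical_category K.
Proof.
  constructor; simpl.
  - apply Caeq_eq.
  - destruct 1; reflexivity.
  - apply Cmul_defined; assumption.
  - apply Cmul_fun; assumption.
  - destruct 1; reflexivity.
  - destruct 1; reflexivity.
  - intros [] ?; simpl; tauto.
  - intro a. exists (Cunit Hp Hs (Ctgt a)). simpl. auto.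
  - intro a. exists (Cunit Hp Hs (Csrc a)). simpl. auto.
  - apply Cmul_unit_l.
  - apply Cmul_unit_r.
  - apply Cmul_assoc; assumption.
  - destruct 1; simpl; try tauto. intros ->. apply le_antisym; assumption.
  - destruct 1; simpl; try tauto. intros ->. apply le_antisym; assumption.
Qed.

Lemma below_neq_uv x w y : le w y -> (x, y) <> (u, v) -> (x, w) <> (u, v).
Proof.
  intros H N E. injection E as -> ->. apply N. rewrite (maximal_v Hs H). reflexivity.
Qed.

Lemma above_neq_uv x w y : le x w -> (x, y) <> (u, v) -> (w, y) <> (u, v).
Proof.
  intros H N E. injection E as -> ->. apply N. rewrite (minimal_u Hs H). reflexivity.
Qed.

Lemma lfactor_CIv x w y (hxw : le x w) nxw (hwy : le w y) (hxy : le x y) nxy :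
  lfactorK (CIv hxw nxw) (CIv hxy nxy).
Proof. exists (CIv hwy (above_neq_uv hxw nxy)). apply Cmul_iv. Qed.

Lemma rfactor_CIv x w y (hxw : le x w) (hwy : le w y) nwy (hxy : le x y) nxy :
  rfactorK (CIv hwy nwy) (CIv hxy nxy).
Proof. exists (CIv hxw (below_neq_uv hwy nxy)). apply Cmul_iv. Qed.

Lemma lfactor_CIv_inv (k : CA) x y (h : le x y) n : lfactorK k (CIv h n) ->
  exists w hw nw, k = @CIv T le u v x w hw nw /\ le w y.
Proof. intros (z & H). inversion H. subst. eauto. Qed.

Lemma rfactor_CIv_inv (k : CA) x y (h : le x y) n : rfactorK k (CIv h n) ->
  exists w hw nw, k = @CIv T le u v w y hw nw /\ le x w.
Proof. intros (z & H). inversion H. subst. eauto. Qed.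

Lemma lfactor_CCh_inv (k : CA) Z (hZ : maxchain le u v Z) : lfactorK k (CCh hZ) ->
  k = Cunit Hp Hs u \/ k = CCh hZ \/
  exists w h n, k = @CIv T le u v u w h n /\ open w /\ Z w.
Proof.
  intros (z & H). inversion H; subst.
  - left. apply CIv_irrel.
  - right; left. apply CCh_ext. assumption.
  - right; right. eexists _, _, _. split; [reflexivity|]. split; [split|]; assumption.
Qed.

Lemma rfactor_CCh_inv (k : CA) Z (hZ : maxchain le u v Z) : rfactorK k (CCh hZ) ->
  k = Cunit Hp Hs v \/ k = CCh hZ \/
  exists w h n, k = @CIv T le u v w v h n /\ open w /\ Z w.
Proof.
  intros (z & H). inversion H; subst.
  - right; left. apply CCh_ext. assumption.
  - left. apply CIv_irrel.
  - right; right. eexists _, _, _. split; [reflexivity|]. split; [split|]; assumption.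
Qed.

Hypothesis Hmeet : meets_above le.
Hypothesis Hjoin : joins_below le.

Lemma common_lfactor_chains k Z Z' (hZ : maxchain le u v Z) (hZ' : maxchain le u v Z') :
  lfactorK k (CCh hZ) -> lfactorK k (CCh hZ') -> ~ (forall t, Z t <-> Z' t) ->
  k = Cunit Hp Hs u.
Proof.
  intros K1 K2 N.
  destruct (lfactor_CCh_inv K1) as [E1|[E1|(w & h & n & E1 & O & Zw)]]; [assumption| |];
    destruct (lfactor_CCh_inv K2) as [E2|[E2|(w' & h' & n' & E2 & O' & Zw')]];
    rewrite E1 in E2; unfold Cunit in E2; try discriminate; exfalso.
  - apply N. injection E2 as ->. tauto.
  - injection E2 as ->. apply (open_not_u O). reflexivity.
  - injection E2 as <-. apply N, (maxchain_unique Hp Hs hZ hZ' Zw Zw' O).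
Qed.

Lemma common_rfactor_chains k Z Z' (hZ : maxchain le u v Z) (hZ' : maxchain le u v Z') :
  rfactorK k (CCh hZ) -> rfactorK k (CCh hZ') -> ~ (forall t, Z t <-> Z' t) ->
  k = Cunit Hp Hs v.
Proof.
  intros K1 K2 N.
  destruct (rfactor_CCh_inv K1) as [E1|[E1|(w & h & n & E1 & O & Zw)]]; [assumption| |];
    destruct (rfactor_CCh_inv K2) as [E2|[E2|(w' & h' & n' & E2 & O' & Zw')]];
    rewrite E1 in E2; unfold Cunit in E2; try discriminate; exfalso.
  - apply N. injection E2 as ->. tauto.
  - injection E2 as ->. apply (open_not_v O). reflexivity.
  - injection E2 as <-. apply N, (maxchain_unique Hp Hs hZ hZ' Zw Zw' O).
Qed.

Lemma lgcd_interval_chain y (h : le u y) n Z (hZ : maxchain le u v Z) : exists g,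
  lfactorK g (CIv h n) /\ lfactorK g (CCh hZ) /\
  forall k, lfactorK k (CIv h n) -> lfactorK k (CCh hZ) -> lfactorK k g.
Proof.
  pose proof Ccat_category as HC.
  assert (Ny : y <> v) by (intros ->; apply n; reflexivity).
  destruct (Hmeet h (le_uv Hs)) as (w & Huw & Hwy & Hwv & Hw).
  destruct (classic (open w /\ Z w)) as [(Ow & Zw)|NO].
  - exists (CIv Huw (below_neq_uv Hwy n)).
    split; [apply lfactor_CIv; assumption|split].
    + assert (Nw : (w, v) <> (u, v)) by (intro E; injection E; apply (open_not_u Ow)).
      exists (CIv Hwv Nw). apply Cmul_split; try apply Ow; assumption.
    + intros k K1 K2. destruct (lfactor_CIv_inv K1) as (w' & hw & nw & -> & Hw').
      destruct (lfactor_CCh_inv K2) as [E|[E|(w0 & h0 & n0 & E & O0 & Z0)]];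
        unfold Cunit in E; try discriminate; injection E as ->.
      * apply (lfactor_id HC); reflexivity.
      * apply lfactor_CIv, Hw; auto. apply O0.
  - exists (Cunit Hp Hs u).
    split; [apply (lfactor_id HC); reflexivity|split; [apply (lfactor_id HC); reflexivity|]].
    intros k K1 K2. destruct (lfactor_CIv_inv K1) as (w' & hw & nw & -> & Hw').
    destruct (lfactor_CCh_inv K2) as [E|[E|(w0 & h0 & n0 & E & O0 & Z0)]];
      unfold Cunit in E; try discriminate; injection E as ->.
    + apply (lfactor_id HC); reflexivity.
    + exfalso. apply NO.
      assert (Lw : le w0 w) by (apply Hw; auto; apply O0).
      assert (Ow : open w).
      { apply open_intro; auto.
        - intros ->. apply (open_not_u O0), le_antisym; assumption.
        - intros ->. apply Ny, (maximal_v Hs Hwy). }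
      split; [assumption|]. apply (maxchain_comparable Hp Hs hZ Z0 O0 Ow (or_introl Lw)).
Qed.

Lemma rgcd_interval_chain x (h : le x v) n Z (hZ : maxchain le u v Z) : exists g,
  rfactorK g (CIv h n) /\ rfactorK g (CCh hZ) /\
  forall k, rfactorK k (CIv h n) -> rfactorK k (CCh hZ) -> rfactorK k g.
Proof.
  pose proof (conical_category_op Ccat_category) as HC.
  assert (Nx : x <> u) by (intros ->; apply n; reflexivity).
  destruct (Hjoin h (le_uv Hs)) as (w & Hxw & Huw & Hwv & Hw).
  destruct (classic (open w /\ Z w)) as [(Ow & Zw)|NO].
  - exists (CIv Hwv (above_neq_uv Hxw n)).
    split; [apply rfactor_CIv; assumption|split].
    + assert (Nw : (u, w) <> (u, v)) by (intro E; injection E; apply (open_not_v Ow)).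
      exists (CIv Huw Nw). apply Cmul_split; try apply Ow; assumption.
    + intros k K1 K2. destruct (rfactor_CIv_inv K1) as (w' & hw & nw & -> & Hw').
      destruct (rfactor_CCh_inv K2) as [E|[E|(w0 & h0 & n0 & E & O0 & Z0)]];
        unfold Cunit in E; try discriminate; injection E as ->.
      * apply (lfactor_id HC); reflexivity.
      * apply rfactor_CIv, Hw; auto. apply O0.
  - exists (Cunit Hp Hs v).
    split; [apply (lfactor_id HC); reflexivity|split; [apply (lfactor_id HC); reflexivity|]].
    intros k K1 K2. destruct (rfactor_CIv_inv K1) as (w' & hw & nw & -> & Hw').
    destruct (rfactor_CCh_inv K2) as [E|[E|(w0 & h0 & n0 & E & O0 & Z0)]];
      unfold Cunit in E; try discriminate; injection E as ->.
    + apply (lfactor_id HC); reflexivity.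
    + exfalso. apply NO.
      assert (Lw : le w w0) by (apply Hw; auto; apply O0).
      assert (Ow : open w).
      { apply open_intro; auto.
        - intros ->. apply Nx, (minimal_u Hs Hxw).
        - intros ->. apply (open_not_v O0), le_antisym; assumption. }
      split; [assumption|]. apply (maxchain_comparable Hp Hs hZ Z0 O0 Ow (or_intror Lw)).
Qed.

Lemma Ccat_left_gcds : left_gcds K.
Proof.
  pose proof Ccat_category as HC. apply (left_gcds_lfactor HC).
  intros [x y h n|Z hZ] [x' y' h' n'|Z' hZ']; simpl; intro E.
  - subst x'. destruct (Hmeet h h') as (w & H1 & H2 & H3 & H4).
    exists (CIv H1 (below_neq_uv H2 n)).
    split; [apply lfactor_CIv; assumption|split; [apply lfactor_CIv; assumption|]].
    intros k K1 K2. destruct (lfactor_CIv_inv K1) as (w1 & hw1 & nw1 & -> & L1).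
    destruct (lfactor_CIv_inv K2) as (w2 & hw2 & nw2 & E2 & L2). injection E2 as <-.
    apply lfactor_CIv, H4; assumption.
  - subst x. apply lgcd_interval_chain.
  - subst x'. destruct (lgcd_interval_chain h' n' hZ) as (g & G1 & G2 & G3).
    exists g. auto.
  - destruct (classic (forall t, Z t <-> Z' t)) as [Eq|Neq].
    + rewrite (CCh_ext hZ hZ' Eq). exists (CCh hZ').
      pose proof (lfactor_refl HC (CCh hZ')). auto.
    + exists (Cunit Hp Hs u).
      split; [apply (lfactor_id HC); reflexivity|split; [apply (lfactor_id HC); reflexivity|]].
      intros k K1 K2. rewrite (common_lfactor_chains K1 K2 Neq). apply (lfactor_refl HC).
Qed.

Lemma Ccat_right_gcds : right_gcds K.
Proof.
  pose proof (conical_category_op Ccat_category) as HC. apply (left_gcds_lfactor HC).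
  intros [x y h n|Z hZ] [x' y' h' n'|Z' hZ']; simpl; intro E.
  - subst y'. destruct (Hjoin h h') as (w & H1 & H2 & H3 & H4).
    exists (CIv H3 (above_neq_uv H1 n)).
    split; [apply rfactor_CIv; assumption|split; [apply rfactor_CIv; assumption|]].
    intros k K1 K2. destruct (rfactor_CIv_inv K1) as (w1 & hw1 & nw1 & -> & L1).
    destruct (rfactor_CIv_inv K2) as (w2 & hw2 & nw2 & E2 & L2). injection E2 as <-.
    apply rfactor_CIv, H4; assumption.
  - subst y. apply rgcd_interval_chain.
  - subst y'. destruct (rgcd_interval_chain h' n' hZ) as (g & G1 & G2 & G3).
    exists g. auto.
  - destruct (classic (forall t, Z t <-> Z' t)) as [Eq|Neq].
    + rewrite (CCh_ext hZ hZ' Eq). exists (CCh hZ').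
      pose proof (lfactor_refl HC (CCh hZ')). auto.
    + exists (Cunit Hp Hs v).
      split; [apply (lfactor_id HC); reflexivity|split; [apply (lfactor_id HC); reflexivity|]].
      intros k K1 K2. rewrite (common_rfactor_chains K1 K2 Neq). apply (lfactor_refl HC).
Qed.

Lemma Ccat_gcd_category : is_gcd_category K.
Proof.
  pose proof Ccat_category as HC.
  split; [|split; [|split; [|split]]].
  - intros x y e H I. exact (conical_l HC H I).
  - apply Ccat_left_cancellative.
  - apply Ccat_right_cancellative.
  - apply Ccat_left_gcds.
  - apply Ccat_right_gcds.
Qed.

End SpindleCategory.

Theorem proposition9p5 (T : Type) (le : T -> T -> Prop) (u v : T) :
  is_poset le ->
  is_gcd_monoid (@interval_rel T le) ->
  extreme_spindle le u v ->
  is_gcd_category (Ccat le u v) /\ is_gcd_monoid (@Umon_rel (Ccat le u v)).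
Proof.
  intros Hp HM Hs.
  destruct (interval_monoid_lattice Hp HM) as (Hmeet & Hjoin).
  pose proof (Ccat_gcd_category Hp Hs Hmeet Hjoin) as HG.
  split; [assumption|].
  apply umon_gcd_monoid; [apply Ccat_category|]; assumption.
Qed.
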